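(* Let $n \ge 1$, $F = \{\mathrm{AND}, \mathrm{OR}\}$, $L = \{x_1, \ldots, x_n\}$ and $\ell \ge n$. The expected runtime $E[T]$ of RLS-GP (with HVL-Prime with subtree deletion as mutation operator, tree size limit $\ell$, and the complete truth table as fitness) on the target $\mathrm{AND}_n$, and likewise on the target $\mathrm{OR}_n$, is $\Omega(n \log n)$.
   Context: Programs are finite rooted binary trees (the empty tree is allowed) whose internal nodes are labelled by binary Boolean functions from $F$ and whose leaves are labelled by literals from $L$; a program computes a Boolean function of $(x_1,\dots,x_n)$ in the obvious way. $\mathrm{AND}_n(x) = x_1 \wedge \dots \wedge x_n$ and $\mathrm{OR}_n(x) = x_1 \vee \dots \vee x_n$. The fitness (to be minimised) of a program $X$ for target $h$ is $f(X) = |\{x \in \{0,1\}^n : X(x) \ne h(x)\}|$. LeafCount$(X)$ is the number of leaves of $X$. HVL-Prime with subtree deletion, applied to a tree $X$: choose $op \in \{\mathrm{INS}, \mathrm{DEL}, \mathrm{SUB}\}$, a literal $l \in L$ and a function $g \in F$, independently and uniformly at random. If $X$ is empty, the result is the tree consisting of the single leaf $l$. Otherwise: if $op = \mathrm{INS}$, choose a node $x$ of $X$ uniformly at random and replace it by a new node labelled $g$ whose two children are the subtree rooted at $x$ and a new leaf $l$, in uniformly random order; if $op = \mathrm{DEL}$, choose a node $x$ of $X$ (leaf or internal) uniformly at random and replace the parent of $x$ by the sibling of $x$ (removing the subtree rooted at $x$ together with its parent); if $op = \mathrm{SUB}$, choose a leaf of $X$ uniformly at random and replace it by $l$. RLS-GP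 with tree size limit $\ell$: start with the empty tree $X$; in each iteration $t = 1, 2, \ldots$ let $X' := $ HVL-Prime$(X)$, and if LeafCount$(X') \le \ell$ and $f(X') \le f(X)$ then set $X := X'$. The runtime $T$ is the number of iterations until the current tree computes exactly the target function (fitness $0$). Asymptotics are as $n \to \infty$. *)

From Stdlib Require Import Reals List Arith Bool.
Import ListNotations.
Open Scope R_scope.

Inductive fn : Type := FAND | FOR.

Definition fn_eval (g : fn) (a b : bool) : bool :=
  match g with FAND => a && b | FOR => a || b end.

(** Non-empty programs: leaves carry a literal index i (literal x_{i+1},
    i in 0..n-1), internal nodes carry a function from F. *)
Inductive tree : Type :=
| Leaf (i : nat)
| Node (g : fn) (l r : tree).

Definition prog := option tree.

(** Inputs x in {0,1}^n are boolean lists of length n; x_{i+1} = nth i x. *)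
Fixpoint eval_tree (x : list bool) (t : tree) : bool :=
  match t with
  | Leaf i => nth i x false
  | Node g a b => fn_eval g (eval_tree x a) (eval_tree x b)
  end.

Fixpoint all_inputs (n : nat) : list (list bool) :=
  match n with
  | O => [[]]
  | S m => map (cons false) (all_inputs m) ++ map (cons true) (all_inputs m)
  end.

Definition AND_n (x : list bool) : bool := forallb (fun b => b) x.
Definition OR_n (x : list bool) : bool := existsb (fun b => b) x.

(** Convention for the empty tree (it computes no function): it gets the
    worst value 2^n + 1, strictly worse than any non-empty tree. *)
Definition fitness (n : nat) (h : list bool -> bool) (X : prog) : nat :=
  match X with
  | None => S (2 ^ n)
  | Some t =>
      length (filter (fun x => negb (Bool.eqb (eval_tree x t) (h x)))
                     (all_inputs n))
  end.

Fixpoint size (t : tree) : nat :=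
  match t with Leaf _ => 1 | Node _ a b => S (size a + size b) end.

Fixpoint leaves (t : tree) : nat :=
  match t with Leaf _ => 1 | Node _ a b => leaves a + leaves b end.

Definition LeafCount (X : prog) : nat :=
  match X with None => 0 | Some t => leaves t end.

(** INS: for every node (preorder), the two results (both child orders);
    a list of length 2 * size t. *)
Fixpoint ins_results (g : fn) (l : nat) (t : tree) : list tree :=
  match t with
  | Leaf i => [Node g t (Leaf l); Node g (Leaf l) t]
  | Node h a b =>
      [Node g t (Leaf l); Node g (Leaf l) t]
      ++ map (fun a' => Node h a' b) (ins_results g l a)
      ++ map (fun b' => Node h a b') (ins_results g l b)
  end.

(** DEL at a non-root node: the parent of the node is replaced by its
    sibling; a list of length size t - 1. *)
Fixpoint del_sub (t : tree) : list tree :=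
  match t with
  | Leaf _ => []
  | Node h a b =>
      [b] ++ map (fun a' => Node h a' b) (del_sub a)
      ++ [a] ++ map (fun b' => Node h a b') (del_sub b)
  end.

(** DEL at every node; deleting the root (which has no parent) removes the
    whole tree, giving the empty program. Length size t. *)
Definition del_results (t : tree) : list prog :=
  None :: map Some (del_sub t).

Fixpoint sub_results (l : nat) (t : tree) : list tree :=
  match t with
  | Leaf _ => [Leaf l]
  | Node h a b =>
      map (fun a' => Node h a' b) (sub_results l a)
      ++ map (fun b' => Node h a b') (sub_results l b)
  end.

(** Distribution (finite list of (probability, outcome)) of HVL-Prime with
    subtree deletion applied to X, with L = {x_1..x_n}: op, literal and
    function uniform and independent, then uniform node / leaf / order. *)
Definition mut_dist (n : nat) (X : prog) : list (R * prog) :=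
  match X with
  | None => map (fun l => (/ INR n, Some (Leaf l))) (seq 0 n)
  | Some t =>
      flat_map (fun g =>
        flat_map (fun l =>
          let w := / 3 * / INR n * / 2 in
          map (fun y => (w / INR (2 * size t), Some y)) (ins_results g l t)
          ++ map (fun y => (w / INR (size t), y)) (del_results t)
          ++ map (fun y => (w / INR (leaves t), Some y)) (sub_results l t))
        (seq 0 n))
      [FAND; FOR]
  end.

(** One iteration of RLS-GP with tree size limit ell, applied to the
    sub-distribution of runs that have not yet reached fitness 0
    (runs that already reached fitness 0 are dropped: they have stopped). *)
Definition rls_step (n ell : nat) (h : list bool -> bool)
    (D : list (R * prog)) : list (R * prog) :=
  flat_map (fun pX : R * prog =>
    let (p, X) := pX in
    if Nat.eqb (fitness n h X) 0 then []
    else map (fun qY : R * prog =>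
           let (q, Y) := qY in
           (p * q,
            if Nat.leb (LeafCount Y) ell && Nat.leb (fitness n h Y) (fitness n h X)
            then Y else X))
         (mut_dist n X))
    D.

Fixpoint rls_dist (n ell : nat) (h : list bool -> bool) (t : nat)
  : list (R * prog) :=
  match t with
  | O => [(1, None)]
  | S t' => rls_step n ell h (rls_dist n ell h t')
  end.

(** P(T > t): probability that after t iterations the current tree does not
    yet compute the target. *)
Definition surv (n ell : nat) (h : list bool -> bool) (t : nat) : R :=
  fold_right Rplus 0
    (map (fun pX => if Nat.eqb (fitness n h (snd pX)) 0 then 0 else fst pX)
         (rls_dist n ell h t)).

(** Partial sums of E[T] = sum_{t >= 0} P(T > t) (tail-sum formula for an
    N u {oo}-valued T; valid also when E[T] = oo).  E[T] >= v holds iff the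
    supremum of these partial sums is >= v. *)
Definition ET_partial (n ell : nat) (h : list bool -> bool) (N : nat) : R :=
  fold_right Rplus 0 (map (surv n ell h) (seq 0 N)).

From Stdlib Require Import Reals List Lia Lra Bool.
Import ListNotations.
Open Scope R_scope.

(** Let k(X) be the number of distinct variables occurring in the current tree X.
    A mutation introduces the single literal l, so k grows by at most one, and only
    when l is one of the n - k missing variables, which happens with probability
    (n - k)/n.  A tree of fitness 0 contains all n variables, because AND_n and
    OR_n depend on each of them.  Hence the coupon-collector potential
    n * H(n - k(X)) drops in expectation by at most n/(n - k) * (n - k)/n = 1 per
    iteration, whatever the size limit, and it starts at n * H(n) >= n ln n.
    Additive drift, truncated at time n^2 >= n * H(n), gives E[T] >= n * H(n) / 2. *)

Definition sumR {A : Type} (f : A -> R) (L : list A) : R := fold_right Rplus 0 (map f L).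

Lemma sumR_nil {A : Type} (f : A -> R) : sumR f [] = 0.
Proof. reflexivity. Qed.

Lemma sumR_cons {A : Type} (f : A -> R) a L : sumR f (a :: L) = f a + sumR f L.
Proof. reflexivity. Qed.

Section Sums.
Context {A B : Type}.
Implicit Types (f g : A -> R) (L : list A).

Lemma sumR_app f L1 L2 : sumR f (L1 ++ L2) = sumR f L1 + sumR f L2.
Proof. induction L1 as [|a L1 IH]; simpl app; rewrite ?sumR_nil, ?sumR_cons, ?IH; ring. Qed.

Lemma sumR_ext f g L : (forall x, In x L -> f x = g x) -> sumR f L = sumR g L.
Proof. intros E; unfold sumR; f_equal; apply map_ext_in, E. Qed.

Lemma sumR_le f g L : (forall x, In x L -> f x <= g x) -> sumR f L <= sumR g L.
Proof.
  induction L as [|a L IH]; intros Hle; [apply Rle_refl|rewrite !sumR_cons].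
  apply Rplus_le_compat; [apply Hle; left | apply IH; intros; apply Hle; right]; auto.
Qed.

Lemma sumR_scal c f L : sumR (fun x => c * f x) L = c * sumR f L.
Proof. induction L as [|a L IH]; rewrite ?sumR_nil, ?sumR_cons, ?IH; ring. Qed.

Lemma sumR_minus f g L : sumR (fun x => f x - g x) L = sumR f L - sumR g L.
Proof. induction L as [|a L IH]; rewrite ?sumR_nil, ?sumR_cons, ?IH; ring. Qed.

Lemma sumR_const c L : sumR (fun _ => c) L = c * INR (length L).
Proof.
  induction L as [|a L IH]; simpl length; rewrite ?sumR_nil, ?sumR_cons, ?S_INR, ?IH; simpl; ring.
Qed.

Lemma sumR_if (p : A -> bool) a b L :
  sumR (fun x => if p x then a else b) L =
  INR (length (filter p L)) * a + INR (length (filter (fun x => negb (p x)) L)) * b.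
Proof.
  induction L as [|x L IH]; [rewrite sumR_nil; simpl; ring|]. rewrite sumR_cons, IH; simpl.
  destruct (p x); simpl length; rewrite ?S_INR; ring.
Qed.

Lemma sumR_map f (g : B -> A) (L : list B) : sumR f (map g L) = sumR (fun x => f (g x)) L.
Proof. unfold sumR; now rewrite map_map. Qed.

Lemma sumR_flat_map f (g : B -> list A) (L : list B) :
  sumR f (flat_map g L) = sumR (fun x => sumR f (g x)) L.
Proof. induction L; cbn [flat_map]; [reflexivity|]. now rewrite sumR_app, sumR_cons, IHL. Qed.

End Sums.

Lemma sumR_seq_S f t : sumR f (seq 0 (S t)) = sumR f (seq 0 t) + f t.
Proof. rewrite seq_S, sumR_app, sumR_cons, sumR_nil, Nat.add_0_l; ring. Qed.

Section WeightedLists.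
Context {A B : Type}.
Implicit Types (F G : A -> R) (D : list (R * A)).

Definition expect (F : A -> R) (D : list (R * A)) : R := sumR (fun e => fst e * F (snd e)) D.

Definition mass (D : list (R * A)) : R := expect (fun _ => 1) D.

Definition nonneg_weights (D : list (R * A)) : Prop := forall e, In e D -> 0 <= fst e.

Lemma expect_ext F G D : (forall e, In e D -> F (snd e) = G (snd e)) -> expect F D = expect G D.
Proof. intros E; apply sumR_ext; intros e He; now rewrite E. Qed.

Lemma expect_app F D1 D2 : expect F (D1 ++ D2) = expect F D1 + expect F D2.
Proof. apply sumR_app. Qed.

Lemma expect_le F G D : nonneg_weights D -> (forall X, F X <= G X) -> expect F D <= expect G D.
Proof. intros Hw Hle; apply sumR_le; intros e He; apply Rmult_le_compat_l; auto. Qed.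

Lemma expect_ge_mass b F D :
  nonneg_weights D -> (forall e, In e D -> b <= F (snd e)) -> b * mass D <= expect F D.
Proof.
  intros Hw Hb; unfold mass, expect; rewrite <- sumR_scal.
  apply sumR_le; intros e He. specialize (Hw e He); specialize (Hb e He); nra.
Qed.

Lemma expect_scal c F D : expect (fun X => c * F X) D = c * expect F D.
Proof. unfold expect; rewrite <- sumR_scal; apply sumR_ext; intros; ring. Qed.

Lemma expect_minus F G D : expect (fun X => F X - G X) D = expect F D - expect G D.
Proof. unfold expect; rewrite <- sumR_minus; apply sumR_ext; intros; ring. Qed.

Lemma expect_flat_map F (g : B -> list (R * A)) (L : list B) :
  expect F (flat_map g L) = sumR (fun x => expect F (g x)) L.
Proof. apply sumR_flat_map. Qed.

Lemma expect_uniform c F (G : B -> A) (L : list B) :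
  expect F (map (fun y => (c, G y)) L) = c * sumR (fun y => F (G y)) L.
Proof. unfold expect; rewrite sumR_map, <- sumR_scal; reflexivity. Qed.

Lemma mass_uniform c (G : B -> A) (L : list B) :
  mass (map (fun y => (c, G y)) L) = c * INR (length L).
Proof. unfold mass; rewrite expect_uniform, sumR_const; ring. Qed.

End WeightedLists.

Fixpoint harmonic (m : nat) : R :=
  match m with O => 0 | S m' => harmonic m' + / INR (S m') end.

Lemma harmonic_monotone m1 m2 : (m1 <= m2)%nat -> harmonic m1 <= harmonic m2.
Proof.
  induction 1; cbn [harmonic]; [lra|].
  assert (0 < / INR (S m)) by (apply Rinv_0_lt_compat, lt_0_INR; lia). lra.
Qed.

Lemma harmonic_le_INR m : harmonic m <= INR m.
Proof.
  induction m; cbn [harmonic]; [simpl; lra|].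
  assert (/ INR (S m) <= 1) by (rewrite <- Rinv_1; apply Rinv_le_contravar; [lra|];
    rewrite S_INR; pose proof (pos_INR m); lra).
  rewrite S_INR in *; lra.
Qed.

Lemma ln_le_sub_1 x : 0 < x -> ln x <= x - 1.
Proof. intros Hx; pose proof (exp_ineq1_le (ln x)); rewrite exp_ln in *; lra. Qed.

Lemma ln_succ_le_harmonic m : ln (INR m + 1) <= harmonic m.
Proof.
  induction m as [|m IH]; cbn [harmonic]; [simpl; rewrite Rplus_0_l, ln_1; lra|].
  rewrite S_INR; pose proof (pos_INR m).
  assert (Hy : 0 < / (INR m + 1)) by (apply Rinv_0_lt_compat; lra).
  replace (INR m + 1 + 1) with ((INR m + 1) * (1 + / (INR m + 1))) by (field; lra).
  rewrite ln_mult by lra.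
  pose proof (ln_le_sub_1 (1 + / (INR m + 1))). lra.
Qed.

Lemma ln_le_harmonic m : (1 <= m)%nat -> ln (INR m) <= harmonic m.
Proof.
  intros Hm; pose proof (ln_succ_le_harmonic m).
  assert (ln (INR m) < ln (INR m + 1)) by (apply ln_increasing; [apply lt_0_INR; lia | lra]). lra.
Qed.

Definition potential (n k : nat) : R := INR n * harmonic (n - k).

Lemma potential_antitone n k1 k2 : (k1 <= k2)%nat -> potential n k2 <= potential n k1.
Proof. intros; apply Rmult_le_compat_l; [apply pos_INR | apply harmonic_monotone; lia]. Qed.

Lemma potential_full n : potential n n = 0.
Proof. unfold potential; rewrite Nat.sub_diag; simpl; ring. Qed.

Lemma potential_succ n k : (k < n)%nat -> potential n k = potential n (S k) + INR n / INR (n - k).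
Proof.
  intros; unfold potential.
  replace (n - k)%nat with (S (n - S k)) by lia; cbn [harmonic]; unfold Rdiv; ring.
Qed.

Lemma additive_drift_lower_bound (P s : nat -> R) (c : R) (N : nat) :
  0 <= c -> c <= P O ->
  (forall t, P t - s t <= P (S t)) -> (forall t, P t <= c * s t) ->
  (forall t, s (S t) <= s t) -> c <= INR N -> c <= 2 * sumR s (seq 0 N).
Proof.
  intros Hc HP0 Hdrift HPs Hmono HN.
  assert (HP : forall t, c - sumR s (seq 0 t) <= P t).
  { induction t; [simpl; rewrite sumR_nil; lra|].
    rewrite sumR_seq_S; specialize (Hdrift t); lra. }
  assert (Htail : forall t, INR t * s t <= sumR s (seq 0 t)).
  { induction t; [simpl; rewrite sumR_nil; lra|].
    rewrite sumR_seq_S, S_INR; specialize (Hmono t); pose proof (pos_INR t); nra. }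
  specialize (HP N); specialize (HPs N); specialize (Htail N).
  destruct (Rle_or_lt 0 (s N)); nra.
Qed.

Fixpoint occurs (i : nat) (t : tree) : bool :=
  match t with Leaf j => Nat.eqb i j | Node _ a b => occurs i a || occurs i b end.

Definition occurs_prog (i : nat) (X : prog) : bool :=
  match X with None => false | Some t => occurs i t end.

Definition nvars (n : nat) (X : prog) : nat :=
  length (filter (fun i => occurs_prog i X) (seq 0 n)).

Definition vars_incl (X : prog) (l : nat) (Y : prog) : Prop :=
  forall j, occurs_prog j Y = true -> occurs_prog j X = true \/ j = l.

Lemma nvars_None n : nvars n None = 0%nat.
Proof. unfold nvars; induction (seq 0 n); auto. Qed.

Lemma nvars_le n X : (nvars n X <= n)%nat.
Proof. unfold nvars; rewrite <- (length_seq n 0) at 2; apply filter_length_le. Qed.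

Lemma nvars_vars_incl n X l Y : vars_incl X l Y ->
  (nvars n Y <= nvars n X + (if occurs_prog l X then 0 else 1))%nat.
Proof.
  intros Hincl; unfold nvars.
  assert (Hdup : NoDup (filter (fun i => occurs_prog i Y) (seq 0 n)))
    by apply NoDup_filter, seq_NoDup.
  destruct (occurs_prog l X) eqn:Hl.
  - rewrite Nat.add_0_r; apply NoDup_incl_length; [exact Hdup|].
    intros j Hj; apply filter_In in Hj as [Hjn HjY]; apply filter_In.
    destruct (Hincl j HjY) as [HjX | ->]; auto.
  - rewrite Nat.add_1_r.
    apply (NoDup_incl_length (l' := l :: filter (fun i => occurs_prog i X) (seq 0 n)) Hdup).
    intros j Hj; apply filter_In in Hj as [Hjn HjY].
    destruct (Hincl j HjY) as [HjX | ->]; [right; apply filter_In | left]; auto.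
Qed.

Lemma vars_incl_node_l g a a' b l :
  vars_incl (Some a) l (Some a') -> vars_incl (Some (Node g a b)) l (Some (Node g a' b)).
Proof.
  intros Ha j; simpl; rewrite !orb_true_iff.
  intros [Hj | Hj]; [destruct (Ha j Hj) |]; auto.
Qed.

Lemma vars_incl_node_r g a b b' l :
  vars_incl (Some b) l (Some b') -> vars_incl (Some (Node g a b)) l (Some (Node g a b')).
Proof.
  intros Hb j; simpl; rewrite !orb_true_iff.
  intros [Hj | Hj]; [| destruct (Hb j Hj)]; auto.
Qed.

Lemma vars_incl_graft g t l :
  vars_incl (Some t) l (Some (Node g t (Leaf l))) /\
  vars_incl (Some t) l (Some (Node g (Leaf l) t)).
Proof.
  split; intros j; simpl; rewrite orb_true_iff, Nat.eqb_eq; intros [Hj | Hj]; auto.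
Qed.

Lemma ins_results_vars g l t y : In y (ins_results g l t) -> vars_incl (Some t) l (Some y).
Proof.
  revert y; induction t as [i | h a IHa b IHb]; intros y Hy.
  - destruct (vars_incl_graft g (Leaf i) l); destruct Hy as [<- | [<- | []]]; assumption.
  - cbn [ins_results] in Hy; rewrite !in_app_iff, !in_map_iff in Hy.
    destruct Hy as [Hy | [[a' [<- Ha]] | [b' [<- Hb]]]].
    + destruct (vars_incl_graft g (Node h a b) l); destruct Hy as [<- | [<- | []]]; assumption.
    + apply vars_incl_node_l, IHa, Ha.
    + apply vars_incl_node_r, IHb, Hb.
Qed.

Lemma sub_results_vars l t y : In y (sub_results l t) -> vars_incl (Some t) l (Some y).
Proof.
  revert y; induction t as [i | h a IHa b IHb]; intros y Hy.
  - destruct Hy as [<- | []]; intros j Hj; right; now apply Nat.eqb_eq.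
  - cbn [sub_results] in Hy; rewrite !in_app_iff, !in_map_iff in Hy.
    destruct Hy as [[a' [<- Ha]] | [b' [<- Hb]]].
    + apply vars_incl_node_l, IHa, Ha.
    + apply vars_incl_node_r, IHb, Hb.
Qed.

Lemma del_sub_vars l t y : In y (del_sub t) -> vars_incl (Some t) l (Some y).
Proof.
  revert y; induction t as [i | h a IHa b IHb]; intros y Hy; [destruct Hy|].
  cbn [del_sub] in Hy; rewrite !in_app_iff, !in_map_iff in Hy.
  destruct Hy as [[<- | []] | [[a' [<- Ha]] | [[<- | []] | [b' [<- Hb]]]]].
  - intros j Hj; left; simpl in *; now rewrite Hj, orb_true_r.
  - apply vars_incl_node_l, IHa, Ha.
  - intros j Hj; left; simpl in *; now rewrite Hj.
  - apply vars_incl_node_r, IHb, Hb.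
Qed.

Lemma del_results_vars l t Y : In Y (del_results t) -> vars_incl (Some t) l Y.
Proof.
  intros [<- | HY]; [intros j Hj; discriminate|].
  apply in_map_iff in HY as [y [<- Hy]]; now apply del_sub_vars.
Qed.

Lemma size_pos t : (1 <= size t)%nat.
Proof. destruct t; simpl; lia. Qed.

Lemma leaves_pos t : (1 <= leaves t)%nat.
Proof. induction t; simpl; lia. Qed.

Lemma length_ins_results g l t : length (ins_results g l t) = (2 * size t)%nat.
Proof.
  induction t; simpl; [reflexivity|].
  rewrite !length_app, !length_map, IHt1, IHt2; simpl; lia.
Qed.

Lemma length_del_results t : length (del_results t) = size t.
Proof.
  unfold del_results; simpl; rewrite length_map.
  induction t; simpl; [reflexivity|].
  rewrite length_app; simpl; rewrite ?length_app, !length_map; simpl; lia.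
Qed.

Lemma length_sub_results l t : length (sub_results l t) = leaves t.
Proof. induction t; simpl; [reflexivity|]. rewrite !length_app, !length_map; lia. Qed.

Definition mut_block (n : nat) (g : fn) (l : nat) (t : tree) : list (R * prog) :=
  let w := / 3 * / INR n * / 2 in
  map (fun y => (w / INR (2 * size t), Some y)) (ins_results g l t)
  ++ map (fun y => (w / INR (size t), y)) (del_results t)
  ++ map (fun y => (w / INR (leaves t), Some y)) (sub_results l t).

Lemma expect_mut_dist_tree n t F :
  expect F (mut_dist n (Some t)) =
  sumR (fun g => sumR (fun l => expect F (mut_block n g l t)) (seq 0 n)) [FAND; FOR].
Proof.
  change (mut_dist n (Some t))
    with (flat_map (fun g => flat_map (fun l => mut_block n g l t) (seq 0 n)) [FAND; FOR]).
  rewrite expect_flat_map; apply sumR_ext; intros g _; apply expect_flat_map.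
Qed.

Lemma mut_block_nonneg n g l t : (1 <= n)%nat -> nonneg_weights (mut_block n g l t).
Proof.
  intros Hn e He.
  assert (Hw : forall d, (1 <= d)%nat -> 0 <= / 3 * / INR n * / 2 / INR d).
  { intros d Hd; apply Rlt_le; unfold Rdiv.
    repeat apply Rmult_lt_0_compat; apply Rinv_0_lt_compat; try lra; apply lt_0_INR; lia. }
  pose proof (size_pos t); pose proof (leaves_pos t).
  unfold mut_block in He; rewrite !in_app_iff, !in_map_iff in He.
  destruct He as [[y [<- _]] | [[y [<- _]] | [y [<- _]]]]; apply Hw; lia.
Qed.

Lemma mass_mut_block n g l t : (1 <= n)%nat -> mass (mut_block n g l t) = / (2 * INR n).
Proof.
  intros Hn; unfold mut_block, mass; rewrite !expect_app, !expect_uniform, !sumR_const.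
  rewrite length_ins_results, length_del_results, length_sub_results.
  pose proof (size_pos t); pose proof (leaves_pos t).
  assert (0 < INR n) by (apply lt_0_INR; lia).
  assert (0 < INR (size t)) by (apply lt_0_INR; lia).
  assert (0 < INR (leaves t)) by (apply lt_0_INR; lia).
  rewrite mult_INR; simpl INR; field; lra.
Qed.

Lemma mut_block_vars n g l t e : In e (mut_block n g l t) -> vars_incl (Some t) l (snd e).
Proof.
  unfold mut_block; rewrite !in_app_iff, !in_map_iff.
  intros [[y [<- Hy]] | [[y [<- Hy]] | [y [<- Hy]]]].
  - now apply ins_results_vars with g.
  - now apply del_results_vars.
  - now apply sub_results_vars.
Qed.

Lemma mut_dist_nonneg n X : (1 <= n)%nat -> nonneg_weights (mut_dist n X).
Proof.
  intros Hn e He; destruct X as [t |].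
  - apply in_flat_map in He as [g [_ He]]; apply in_flat_map in He as [l [_ He]].
    exact (mut_block_nonneg n g l t Hn e He).
  - apply in_map_iff in He as [l [<- _]].
    apply Rlt_le, Rinv_0_lt_compat, lt_0_INR; lia.
Qed.

Lemma mass_mut_dist n X : (1 <= n)%nat -> mass (mut_dist n X) = 1.
Proof.
  intros Hn; assert (0 < INR n) by (apply lt_0_INR; lia).
  destruct X as [t |].
  - unfold mass; rewrite expect_mut_dist_tree.
    rewrite (sumR_ext _ (fun _ => / 2)); [rewrite sumR_const; simpl; field|].
    intros g _; rewrite (sumR_ext _ (fun _ => / (2 * INR n))).
    + rewrite sumR_const, length_seq; field; lra.
    + intros l _; now apply mass_mut_block.
  - change (mut_dist n None) with (map (fun l => (/ INR n, Some (Leaf l))) (seq 0 n)).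
    rewrite mass_uniform, length_seq; field; lra.
Qed.

Lemma expect_mut_dist_ge n X F (b : nat -> R) : (1 <= n)%nat ->
  (forall l Y, vars_incl X l Y -> b l <= F Y) ->
  / INR n * sumR b (seq 0 n) <= expect F (mut_dist n X).
Proof.
  intros Hn Hb; assert (0 < INR n) by (apply lt_0_INR; lia).
  destruct X as [t |].
  - assert (Hg : forall g, / (2 * INR n) * sumR b (seq 0 n)
                           <= sumR (fun l => expect F (mut_block n g l t)) (seq 0 n)).
    { intros g; rewrite <- sumR_scal; apply sumR_le; intros l _.
      rewrite <- (mass_mut_block n g l t Hn), Rmult_comm.
      apply expect_ge_mass; [now apply mut_block_nonneg|].
      intros e He; apply Hb, (mut_block_vars n g l t e He). }
    rewrite expect_mut_dist_tree, !sumR_cons, sumR_nil.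
    pose proof (Hg FAND); pose proof (Hg FOR).
    replace (/ INR n * sumR b (seq 0 n))
      with (/ (2 * INR n) * sumR b (seq 0 n) + / (2 * INR n) * sumR b (seq 0 n)) by (field; lra).
    lra.
  - change (mut_dist n None) with (map (fun l => (/ INR n, Some (Leaf l))) (seq 0 n)).
    rewrite expect_uniform; apply Rmult_le_compat_l; [apply Rlt_le, Rinv_0_lt_compat; lra|].
    apply sumR_le; intros l _; apply Hb; intros j Hj; right; now apply Nat.eqb_eq.
Qed.

Definition depends_on_all (n : nat) (h : list bool -> bool) : Prop :=
  forall i, (i < n)%nat -> exists x1 x2, length x1 = n /\ length x2 = n /\
    (forall j, j <> i -> nth j x1 false = nth j x2 false) /\ h x1 <> h x2.

Lemma eval_tree_indep i t x1 x2 : occurs i t = false ->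
  (forall j, j <> i -> nth j x1 false = nth j x2 false) -> eval_tree x1 t = eval_tree x2 t.
Proof.
  intros Hi Hx; induction t as [j | g a IHa b IHb]; simpl in *.
  - apply Hx; intros ->; now rewrite Nat.eqb_refl in Hi.
  - apply orb_false_iff in Hi as [Ha Hb]; now rewrite IHa, IHb.
Qed.

Lemma in_all_inputs n x : length x = n -> In x (all_inputs n).
Proof.
  revert x; induction n as [| n IH]; intros [| b x] Hx; try discriminate; [now left|].
  simpl; apply in_app_iff; destruct b; [right | left]; apply in_map, IH; simpl in Hx; lia.
Qed.

Lemma fitness_zero_eval n h t x :
  fitness n h (Some t) = 0%nat -> length x = n -> eval_tree x t = h x.
Proof.
  intros Hfit Hx; apply length_zero_iff_nil in Hfit.
  destruct (Bool.eqb (eval_tree x t) (h x)) eqn:E; [now apply eqb_prop|].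
  assert (Hin : In x (filter (fun x => negb (Bool.eqb (eval_tree x t) (h x))) (all_inputs n)))
    by (apply filter_In; rewrite E; auto using in_all_inputs).
  now rewrite Hfit in Hin.
Qed.

Lemma fitness_zero_occurs n h t i :
  depends_on_all n h -> fitness n h (Some t) = 0%nat -> (i < n)%nat -> occurs i t = true.
Proof.
  intros Hdep Hfit Hi; destruct (occurs i t) eqn:Hocc; [reflexivity | exfalso].
  destruct (Hdep i Hi) as [x1 [x2 [Hx1 [Hx2 [Hx Hh]]]]]; apply Hh.
  rewrite <- (fitness_zero_eval n h t x1), <- (fitness_zero_eval n h t x2) by assumption.
  now apply eval_tree_indep with i.
Qed.

Lemma fitness_zero_nvars n h X :
  depends_on_all n h -> fitness n h X = 0%nat -> nvars n X = n.
Proof.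
  intros Hdep Hfit; apply Nat.le_antisymm; [apply nvars_le|].
  destruct X as [t |]; [| discriminate].
  rewrite <- (length_seq n 0) at 1; apply NoDup_incl_length; [apply seq_NoDup|].
  intros i Hi; apply filter_In; split; [exact Hi|].
  apply in_seq in Hi; eapply fitness_zero_occurs; eauto; lia.
Qed.

Lemma nth_map_seq (f : nat -> bool) n j :
  nth j (map f (seq 0 n)) false = if j <? n then f j else false.
Proof.
  destruct (Nat.ltb_spec j n).
  - rewrite nth_indep with (d' := f 0%nat) by (rewrite length_map, length_seq; lia).
    now rewrite map_nth, seq_nth.
  - apply nth_overflow; rewrite length_map, length_seq; lia.
Qed.

Lemma depends_on_all_flip n h b :
  (forall i, (i < n)%nat ->
     h (map (fun _ => b) (seq 0 n)) <> h (map (fun j => if j =? i then negb b else b) (seq 0 n))) ->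
  depends_on_all n h.
Proof.
  intros Hh i Hi.
  exists (map (fun _ => b) (seq 0 n)), (map (fun j => if j =? i then negb b else b) (seq 0 n)).
  rewrite !length_map, length_seq.
  repeat split; [| now apply Hh].
  intros j Hj; rewrite !nth_map_seq; apply Nat.eqb_neq in Hj; now rewrite Hj.
Qed.

Lemma in_flipped_input n b i : (i < n)%nat ->
  In (negb b) (map (fun j => if j =? i then negb b else b) (seq 0 n)).
Proof.
  intros Hi; apply in_map_iff; exists i; rewrite Nat.eqb_refl.
  split; [reflexivity | apply in_seq; lia].
Qed.

Lemma depends_on_all_AND n : depends_on_all n AND_n.
Proof.
  apply (depends_on_all_flip n AND_n true); intros i Hi; unfold AND_n.
  rewrite (proj2 (forallb_forall _ _))
    by (intros x Hx; now apply in_map_iff in Hx as [j [<- _]]).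
  intros Hall; symmetry in Hall; rewrite forallb_forall in Hall.
  discriminate (Hall _ (in_flipped_input n true i Hi)).
Qed.

Lemma depends_on_all_OR n : depends_on_all n OR_n.
Proof.
  apply (depends_on_all_flip n OR_n false); intros i Hi; unfold OR_n.
  intros Heq.
  assert (Hex : existsb (fun b => b)
                  (map (fun j => if j =? i then negb false else false) (seq 0 n)) = true)
    by (apply existsb_exists; eexists;
        split; [apply (in_flipped_input n false i Hi) | reflexivity]).
  rewrite <- Heq, existsb_exists in Hex.
  destruct Hex as [x [Hx Hxt]]; apply in_map_iff in Hx as [j [<- _]]; discriminate.
Qed.

Definition alive (n : nat) (h : list bool -> bool) (X : prog) : R :=
  if Nat.eqb (fitness n h X) 0 then 0 else 1.

Definition rls_select (n ell : nat) (h : list bool -> bool) (X Y : prog) : prog :=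
  if Nat.leb (LeafCount Y) ell && Nat.leb (fitness n h Y) (fitness n h X) then Y else X.

Lemma expect_rls_step n ell h F D :
  expect F (rls_step n ell h D) =
  expect (fun X => if Nat.eqb (fitness n h X) 0 then 0
                   else expect (fun Y => F (rls_select n ell h X Y)) (mut_dist n X)) D.
Proof.
  unfold rls_step; rewrite expect_flat_map; apply sumR_ext; intros [p X] _; simpl.
  destruct (Nat.eqb (fitness n h X) 0); [rewrite Rmult_0_r; reflexivity|].
  unfold expect; rewrite sumR_map, <- sumR_scal; apply sumR_ext; intros [q Y] _.
  unfold rls_select; simpl; ring.
Qed.

Lemma rls_dist_nonneg n ell h t : (1 <= n)%nat -> nonneg_weights (rls_dist n ell h t).
Proof.
  intros Hn; induction t as [| t IH]; simpl.
  - intros e [<- | []]; simpl; lra.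
  - intros e He; unfold rls_step in He; apply in_flat_map in He as [[p X] [HpX He]].
    destruct (Nat.eqb (fitness n h X) 0); [destruct He|].
    apply in_map_iff in He as [[q Y] [<- HqY]]; simpl.
    apply Rmult_le_pos; [apply (IH _ HpX) | apply (mut_dist_nonneg n X Hn _ HqY)].
Qed.

Lemma surv_expect n ell h t : surv n ell h t = expect (alive n h) (rls_dist n ell h t).
Proof.
  apply sumR_ext; intros [p X] _; unfold alive; simpl.
  destruct (Nat.eqb (fitness n h X) 0); ring.
Qed.

Lemma surv_succ_le n ell h t : (1 <= n)%nat -> surv n ell h (S t) <= surv n ell h t.
Proof.
  intros Hn; rewrite !surv_expect.
  apply Rle_trans with (mass (rls_dist n ell h (S t))).
  - apply expect_le; [now apply rls_dist_nonneg|].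
    intros X; unfold alive; destruct (Nat.eqb _ 0); lra.
  - unfold mass; simpl rls_dist at 1; rewrite expect_rls_step.
    apply Req_le, expect_ext; intros [p X] _; unfold alive; simpl.
    destruct (Nat.eqb _ 0); [reflexivity|]. now apply mass_mut_dist.
Qed.

Lemma potential_average n X : (1 <= n)%nat ->
  potential n (nvars n X) - 1 <=
  / INR n * sumR (fun l => if occurs_prog l X then potential n (nvars n X)
                           else potential n (S (nvars n X))) (seq 0 n).
Proof.
  intros Hn; assert (0 < INR n) by (apply lt_0_INR; lia).
  pose proof (filter_length (fun l => occurs_prog l X) (seq 0 n)) as Hsplit.
  rewrite length_seq in Hsplit; fold (nvars n X) in Hsplit.
  rewrite sumR_if; fold (nvars n X).
  replace (length (filter _ (seq 0 n))) with (n - nvars n X)%nat by lia.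
  pose proof (nvars_le n X).
  destruct (Nat.eq_dec (nvars n X) n) as [-> | Hlt].
  - rewrite Nat.sub_diag, potential_full; simpl; lra.
  - rewrite (potential_succ n (nvars n X)), minus_INR by lia.
    assert (INR (nvars n X) < INR n) by (apply lt_INR; lia).
    right; field; lra.
Qed.

Lemma potential_drift n ell h X : (1 <= n)%nat ->
  potential n (nvars n X) - 1 <=
  expect (fun Y => potential n (nvars n (rls_select n ell h X Y))) (mut_dist n X).
Proof.
  intros Hn; eapply Rle_trans; [now apply potential_average|].
  apply expect_mut_dist_ge; [exact Hn|]; intros l Y HY.
  pose proof (nvars_vars_incl n X l Y HY).
  destruct (occurs_prog l X); apply potential_antitone;
    unfold rls_select; destruct (_ && _); lia.
Qed.

Lemma potential_rls_step n ell h D : (1 <= n)%nat -> depends_on_all n h -> nonneg_weights D ->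
  expect (fun X => potential n (nvars n X)) D - expect (alive n h) D <=
  expect (fun X => potential n (nvars n X)) (rls_step n ell h D).
Proof.
  intros Hn Hdep HD; rewrite expect_rls_step, <- expect_minus.
  apply expect_le; [exact HD|]; intros X; unfold alive.
  destruct (Nat.eqb_spec (fitness n h X) 0) as [Hfit | _].
  - rewrite (fitness_zero_nvars n h X Hdep Hfit), potential_full; lra.
  - now apply potential_drift.
Qed.

Lemma expect_potential_le n h D : depends_on_all n h -> nonneg_weights D ->
  expect (fun X => potential n (nvars n X)) D <= potential n 0 * expect (alive n h) D.
Proof.
  intros Hdep HD; rewrite <- expect_scal; apply expect_le; [exact HD|]; intros X; unfold alive.
  destruct (Nat.eqb_spec (fitness n h X) 0) as [Hfit | _].
  - rewrite (fitness_zero_nvars n h X Hdep Hfit), potential_full; lra.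
  - rewrite Rmult_1_r; apply potential_antitone; lia.
Qed.

Lemma n_harmonic_le_ET_partial n ell h : (1 <= n)%nat -> depends_on_all n h ->
  INR n * harmonic n <= 2 * ET_partial n ell h (n * n).
Proof.
  intros Hn Hdep.
  replace (INR n * harmonic n) with (potential n 0) by (unfold potential; now rewrite Nat.sub_0_r).
  apply (additive_drift_lower_bound
           (fun t => expect (fun X => potential n (nvars n X)) (rls_dist n ell h t))).
  - apply Rmult_le_pos; [apply pos_INR | apply (harmonic_monotone 0)]; lia.
  - simpl; unfold expect; rewrite sumR_cons, sumR_nil, nvars_None; simpl; lra.
  - intros t; rewrite surv_expect; simpl rls_dist at 2.
    apply potential_rls_step; auto using rls_dist_nonneg.
  - intros t; rewrite surv_expect; apply expect_potential_le; auto using rls_dist_nonneg.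
  - intros t; now apply surv_succ_le.
  - unfold potential; rewrite Nat.sub_0_r, mult_INR.
    apply Rmult_le_compat_l; [apply pos_INR | apply harmonic_le_INR].
Qed.

Lemma ET_partial_ge_n_ln_n n ell h : (1 <= n)%nat -> depends_on_all n h ->
  / 2 * INR n * ln (INR n) <= ET_partial n ell h (n * n).
Proof.
  intros Hn Hdep; pose proof (n_harmonic_le_ET_partial n ell h Hn Hdep).
  assert (INR n * ln (INR n) <= INR n * harmonic n)
    by (apply Rmult_le_compat_l; [apply pos_INR | now apply ln_le_harmonic]).
  lra.
Qed.

Theorem theorem3 :
  (exists c : R, c > 0 /\ exists n0 : nat, forall n ell : nat,
     (1 <= n)%nat -> (n0 <= n)%nat -> (n <= ell)%nat ->
     exists N : nat, ET_partial n ell AND_n N >= c * INR n * ln (INR n)) /\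
  (exists c : R, c > 0 /\ exists n0 : nat, forall n ell : nat,
     (1 <= n)%nat -> (n0 <= n)%nat -> (n <= ell)%nat ->
     exists N : nat, ET_partial n ell OR_n N >= c * INR n * ln (INR n)).
Proof.
  split; exists (/ 2); (split; [lra|]); exists 1%nat; intros n ell Hn _ _;
    exists (n * n)%nat; apply Rle_ge, ET_partial_ge_n_ln_n; auto.
  - apply depends_on_all_AND.
  - apply depends_on_all_OR.
Qed.
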